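(* For all $e,f\in\mathrm{Exp}$, if $e\sim f$ then $e\mathrel{\dot\equiv}f$.
   Context: Fix a finite set $T$ of primitive tests, a set $\mathrm{Act}$ of atomic actions, a set $\mathrm{Out}$ of return values, and a semiring $(S,+,\cdot,0,1)$ that is positive ($x+y=0\Rightarrow x=y=0$), refinement (whenever $x+y=z+w$ there exist $s,t,u,v$ with $s+t=x$, $s+u=z$, $u+v=y$, $t+v=w$) and Conway (with ${}^*:S\to S$ satisfying $(a+b)^*=a^*(ba^* )^*$, $(ab)^*=1+a(ba)^*b$). Tests: $b,c\in\mathrm{BExp}::=\mathtt{0}\mid\mathtt{1}\mid t\ (t\in T)\mid\bar b\mid b+c\mid bc$ ($\mathtt 0,\mathtt 1$ false/true, distinct from semiring $0,1$); $\equiv_{BA}$ is Boolean equivalence; $\mathrm{At}$ is the finite set of atoms of the free Boolean algebra on $T$, atoms also regarded as tests; $\alpha\le b$ means $\alpha$ entails $b$. Expressions: $e,f\in\mathrm{Exp}::= p\in\mathrm{Act}\mid b\in\mathrm{BExp}\mid e+_b f\mid e;f\mid e^{(b)}\mid v\in\mathrm{Out}\mid e\oplus_{r,s} f\ (r,s\in S)$; $\odot r:=\mathtt 1\oplus_{r,0}\mathtt 0$. $\mathcal M_\omega(X)$: finitely supported maps $X\to S$, pointwise operations; $\delta_x$ indicator of $x$; $\nu[A]=\sum_{x\in A}\nu(x)$. A wGKAT automaton is $(X,\beta)$ with $\beta:X\to\mathcal M_\omega(\{\mathsf{acc},\mathsf{rej}\}+\mathrm{Out}+\mathrm{Act}\times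 X)^{\mathrm{At}}$. A map $h:X\to Y$ between automata $(X,\beta),(Y,\gamma)$ is a homomorphism if for all $x,\alpha$: $\gamma(h(x))_\alpha(o)=\beta(x)_\alpha(o)$ for $o\in\{\mathsf{acc},\mathsf{rej}\}+\mathrm{Out}$, and $\gamma(h(x))_\alpha(p,y)=\beta(x)_\alpha[\{p\}\times h^{-1}(y)]$. A relation $R\subseteq X\times Y$ is a bisimulation if there is $\rho:R\to\mathcal M_\omega(\{\mathsf{acc},\mathsf{rej}\}+\mathrm{Out}+\mathrm{Act}\times R)^{\mathrm{At}}$ making both projections homomorphisms from $(R,\rho)$; $e\sim f$ means some bisimulation on $(\mathrm{Exp},\partial)$ contains $(e,f)$. The derivative automaton: $\partial(b)_\alpha=\delta_{\mathsf{acc}}$ if $\alpha\le b$, else $\delta_{\mathsf{rej}}$; $\partial(v)_\alpha=\delta_v$; $\partial(p)_\alpha=\delta_{(p,\mathtt 1)}$; $\partial(e+_bf)_\alpha=\partial(e)_\alpha$ if $\alpha\le b$, else $\partial(f)_\alpha$; $\partial(e\oplus_{r,s}f)_\alpha=r\partial(e)_\alpha+s\partial(f)_\alpha$; $\partial(e;f)_\alpha=\sum_x\partial(e)_\alpha(x)c_{\alpha,f}(x)$ with $c_{\alpha,f}(\mathsf{acc})=\partial(f)_\alpha$, $c_{\alpha,f}(x)=\delta_x$ for $x\in\{\mathsf{rej}\}\cup\mathrm{Out}$, $c_{\alpha,f}(p,e')=\delta_{(p,e';f)}$; $\partial(e^{(b)})_\alpha(x)$ is $1$ if $x=\mathsf{acc}$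 and $\alpha\le\bar b$; $\partial(e)_\alpha(\mathsf{acc})^*\partial(e)_\alpha(x)$ if $x\in\{\mathsf{rej}\}\cup\mathrm{Out}$ and $\alpha\le b$; $\partial(e)_\alpha(\mathsf{acc})^*\partial(e)_\alpha(p,e')$ if $x=(p,e';e^{(b)})$ and $\alpha\le b$; $0$ otherwise. $E:\mathrm{Exp}\to S^{\mathrm{At}}$: $E(p)_\alpha=E(v)_\alpha=0$; $E(b)_\alpha=1$ if $\alpha\le b$ else $0$; $E(e\oplus_{r,s}f)_\alpha=rE(e)_\alpha+sE(f)_\alpha$; $E(e+_bf)_\alpha=E(e)_\alpha$ if $\alpha\le b$ else $E(f)_\alpha$; $E(e;f)_\alpha=E(e)_\alpha E(f)_\alpha$; $E(e^{(b)})_\alpha=E(\bar b)_\alpha$. The relation $\equiv$ is the smallest congruence on $\mathrm{Exp}$ (tests taken up to $\equiv_{BA}$; sequencing binds tighter than $\oplus$, $\odot$ binds tightest) containing, for all $e,f,g\in\mathrm{Exp}$, tests $b,c$, $v\in\mathrm{Out}$, $r,s,t,u\in S$: (G1) $e+_be\equiv e$; (G2) $e+_bf\equiv b;e+_bf$; (G3) $e+_bf\equiv f+_{\bar b}e$; (G4) $(e+_bf)+_cg\equiv e+_{bc}(f+_cg)$; (D1) $e\oplus_{r,s}(f+_bg)\equiv(e\oplus_{r,s}f)+_b(e\oplus_{r,s}g)$; (D2) $e\oplus_{r,s}(f\oplus_{t,u}g)\equiv e\oplus_{r,1}(f\oplus_{st,su}g)$; (D3) $b;(e\oplus_{r,s}f)\equiv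 b;(b;e\oplus_{r,s}b;f)$; (S1) $\mathtt 1;e\equiv e\equiv e;\mathtt 1$; (S2) $(e;f);g\equiv e;(f;g)$; (S3) $\mathtt 0;e\equiv\mathtt 0$; (S4) $(e\oplus_{r,s}f);g\equiv e;g\oplus_{r,s}f;g$; (S5) $(e+_bf);g\equiv e;g+_bf;g$; (S6) $v;e\equiv v$; (S7) $b;c\equiv bc$; (L1) $e^{(b)}\equiv e;e^{(b)}+_b\mathtt 1$; (C1) $\odot1\equiv\mathtt 1$; (C2) $\odot0;e\equiv\odot0$; (W1) $e\oplus_{r,s}e\equiv\odot(r+s);e$; (W2) $e\oplus_{r,s}f\equiv f\oplus_{s,r}e$; (W3) $e\oplus_{r,s}(f\oplus_{t,u}g)\equiv(e\oplus_{r,st}f)\oplus_{1,su}g$; (W4) $e\oplus_{ru,s}f\equiv(\odot u;e)\oplus_{r,s}f$; and closed under the rules (L2) if $e\equiv(f\oplus_{r,s}\mathtt 1)+_cg$ then $c;e^{(b)}\equiv c;((\odot(s^*r);f;e^{(b)})+_b\mathtt 1)$; (F1) if $g\equiv e;g+_bf$ and $E(e)_\alpha=0$ for all $\alpha\in\mathrm{At}$ then $g\equiv e^{(b)};f$. Systems of equations: for a finite set $X$ of indeterminates, a term over $X$ is a generalized guarded sum $\mathrm{GS}_{\alpha\in\mathrm{At}}w_\alpha$ (where $\mathrm{GS}_{\alpha\in\emptyset}:=\mathtt 0$ and $\mathrm{GS}_{\alpha\in\Phi}w_\alpha:=w_\gamma+_\gamma\mathrm{GS}_{\alpha\in\Phi\setminus\{\gamma\}}w_\alpha$)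 of weighted sums $w_\alpha=\bigoplus_{i\in I}r_i\cdot t_i$ (with $I$ finite, $\bigoplus_{i\in I}r_i\cdot t_i:=t_j\oplus_{r_j,1}\bigoplus_{i\in I\setminus\{j\}}r_i\cdot t_i$, empty sum $\odot0$), where each $t_i$ is either an expression $f\in\mathrm{Exp}$ or a formal product $g\,x$ with $g\in\mathrm{Exp}$, $x\in X$. A system is $(X,\tau)$ with $X$ finite and $\tau$ assigning a term to each $x\in X$; it is Salomaa if every $g$ occurring in a subterm $g\,x$ of any $\tau(x)$ satisfies $E(g)_\alpha=0$ for all $\alpha$. For $h:X\to\mathrm{Exp}$, $h^\#$ maps a term to the expression obtained by replacing each $g\,x$ by $g;h(x)$. For a congruence $R$, $h$ is a solution up to $R$ if $(h(x),h^\#(\tau(x)))\in R$ for all $x$. Let $\dot\equiv$ be the least congruence containing $\equiv$ and closed under the rule (UA): if $(X,\tau)$ is a Salomaa system and $f,g:X\to\mathrm{Exp}$ are both solutions of $(X,\tau)$ up to $\dot\equiv$, then $f(x)\mathrel{\dot\equiv}g(x)$ for all $x\in X$. *)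

From HB Require Import structures.
From mathcomp Require Import all_boot all_order all_algebra.
From mathcomp Require Import boolp classical_sets cardinality fsbigop.
From Stdlib Require List.
Set Implicit Arguments. Unset Strict Implicit. Unset Printing Implicit Defensive.
Import GRing.Theory.
Local Open Scope ring_scope.
Local Open Scope classical_set_scope.

Section WGKAT.
Variables (T : finType) (Act Out : Type) (S : pzSemiRingType).

Inductive bexp : Type :=
| BZero | BOne | BPrim (t : T) | BNeg (b : bexp)
| BPlus (b c : bexp) | BAnd (b c : bexp).

(* Atoms of the free Boolean algebra on T = valuations T -> bool. *)
Definition atom : finType := {ffun T -> bool}.

Fixpoint beval (a : atom) (b : bexp) : bool :=
  match b with
  | BZero => false | BOne => true | BPrim t => a t
  | BNeg b => ~~ beval a b
  | BPlus b c => beval a b || beval a c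
  | BAnd b c => beval a b && beval a c
  end.

Definition ale (a : atom) (b : bexp) : bool := beval a b.

Definition bequiv (b c : bexp) : Prop := forall a : atom, beval a b = beval a c.

Definition atom_test (a : atom) : bexp :=
  foldr (fun t acc => BAnd (if a t then BPrim t else BNeg (BPrim t)) acc)
        BOne (enum T).

Inductive exp : Type :=
| EAct (p : Act)
| ETest (b : bexp)
| EIf (e : exp) (b : bexp) (f : exp)
| ESeq (e f : exp)
| ELoop (e : exp) (b : bexp)
| ERet (v : Out)
| EChoice (e : exp) (r s : S) (f : exp).

Definition odot (r : S) : exp := EChoice (ETest BOne) r 0 (ETest BZero).

Inductive obs (X : Type) : Type :=
| Acc | Rej | Ret (v : Out) | Tr (p : Act) (x : X).
Arguments Acc {X}. Arguments Rej {X}. Arguments Ret {X}. Arguments Tr {X}.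

(* finitely supported weightings M_omega(Y) are functions Y -> S with finite
   support; nu[A] = sum of nu over A *)
Definition fin_supp (Y : Type) (nu : Y -> S) : Prop :=
  finite_set [set y | nu y <> 0].

Definition mass (Y : Type) (nu : Y -> S) (A : set Y) : S :=
  \sum_(y \in (A : set {classic Y})) nu y.

Definition dirac (Y : Type) (y : Y) : Y -> S :=
  fun z => if `[< z = y >] then 1 else 0.

(* wGKAT automaton (X, beta): beta : X -> M_omega(obs X)^At *)
Definition wautomaton (X : Type) := X -> atom -> obs X -> S.

Definition is_wautomaton (X : Type) (beta : wautomaton X) : Prop :=
  forall x a, fin_supp (beta x a).

Definition homomorphism (X Y : Type) (beta : wautomaton X) (gamma : wautomaton Y)
  (h : X -> Y) : Prop :=
  forall (x : X) (a : atom),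
    [/\ gamma (h x) a Acc = beta x a Acc,
        gamma (h x) a Rej = beta x a Rej,
        (forall v, gamma (h x) a (Ret v) = beta x a (Ret v)) &
        (forall p y, gamma (h x) a (Tr p y) =
           mass (beta x a) [set z | exists x', z = Tr p x' /\ h x' = y])].

Definition bisimulation (X Y : Type) (beta : wautomaton X) (gamma : wautomaton Y)
  (R : X -> Y -> Prop) : Prop :=
  exists rho : wautomaton {xy : X * Y | R xy.1 xy.2},
    [/\ is_wautomaton rho,
        homomorphism rho beta (fun z => (proj1_sig z).1) &
        homomorphism rho gamma (fun z => (proj1_sig z).2)].

Variable star : S -> S.

Definition cont (df : obs exp -> S) (f : exp) (x : obs exp) : obs exp -> S :=
  match x with
  | Acc => df
  | Rej => dirac Rej
  | Ret v => dirac (Ret v)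
  | Tr p e' => dirac (Tr p (ESeq e' f))
  end.

Fixpoint deriv (e : exp) (a : atom) {struct e} : obs exp -> S :=
  match e with
  | ETest b => dirac (if ale a b then Acc else Rej)
  | ERet v => dirac (Ret v)
  | EAct p => dirac (Tr p (ETest BOne))
  | EIf e1 b e2 => if ale a b then deriv e1 a else deriv e2 a
  | EChoice e1 r s e2 => fun y => r * deriv e1 a y + s * deriv e2 a y
  | ESeq e1 e2 =>
      let d1 := deriv e1 a in let d2 := deriv e2 a in
      fun y => \sum_(x \in (setT : set {classic (obs exp)})) d1 x * cont d2 e2 x y
  | ELoop e1 b =>
      let d1 := deriv e1 a in
      fun y =>
        if ale a b then
          match y with
          | Acc => 0
          | Rej => star (d1 Acc) * d1 Rej
          | Ret v => star (d1 Acc) * d1 (Ret v)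
          | Tr p g =>
              match g with
              | ESeq e' k => if `[< k = ELoop e1 b >]
                             then star (d1 Acc) * d1 (Tr p e') else 0
              | _ => 0
              end
          end
        else (match y with Acc => 1 | _ => 0 end)
  end.

Definition bisimilar (e f : exp) : Prop :=
  exists R : exp -> exp -> Prop, bisimulation deriv deriv R /\ R e f.

Fixpoint Efun (e : exp) (a : atom) : S :=
  match e with
  | EAct _ => 0 | ERet _ => 0
  | ETest b => if ale a b then 1 else 0
  | EChoice e1 r s e2 => r * Efun e1 a + s * Efun e2 a
  | EIf e1 b e2 => if ale a b then Efun e1 a else Efun e2 a
  | ESeq e1 e2 => Efun e1 a * Efun e2 a
  | ELoop _ b => if ale a (BNeg b) then 1 else 0
  end.

Inductive eqv : exp -> exp -> Prop :=
| eqv_refl e : eqv e e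
| eqv_sym e f : eqv e f -> eqv f e
| eqv_trans e f g : eqv e f -> eqv f g -> eqv e g
| eqv_if e e' f f' b : eqv e e' -> eqv f f' -> eqv (EIf e b f) (EIf e' b f')
| eqv_seq e e' f f' : eqv e e' -> eqv f f' -> eqv (ESeq e f) (ESeq e' f')
| eqv_loop e e' b : eqv e e' -> eqv (ELoop e b) (ELoop e' b)
| eqv_choice e e' f f' r s : eqv e e' -> eqv f f' ->
    eqv (EChoice e r s f) (EChoice e' r s f')
| eqv_test_ba b c : bequiv b c -> eqv (ETest b) (ETest c)
| eqv_if_ba e f b c : bequiv b c -> eqv (EIf e b f) (EIf e c f)
| eqv_loop_ba e b c : bequiv b c -> eqv (ELoop e b) (ELoop e c)
| eqv_G1 e b : eqv (EIf e b e) e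
| eqv_G2 e f b : eqv (EIf e b f) (EIf (ESeq (ETest b) e) b f)
| eqv_G3 e f b : eqv (EIf e b f) (EIf f (BNeg b) e)
| eqv_G4 e f g b c : eqv (EIf (EIf e b f) c g) (EIf e (BAnd b c) (EIf f c g))
| eqv_D1 e f g b r s :
    eqv (EChoice e r s (EIf f b g)) (EIf (EChoice e r s f) b (EChoice e r s g))
| eqv_D2 e f g r s t u :
    eqv (EChoice e r s (EChoice f t u g)) (EChoice e r 1 (EChoice f (s * t) (s * u) g))
| eqv_D3 e f b r s :
    eqv (ESeq (ETest b) (EChoice e r s f))
        (ESeq (ETest b) (EChoice (ESeq (ETest b) e) r s (ESeq (ETest b) f)))
| eqv_S1l e : eqv (ESeq (ETest BOne) e) e
| eqv_S1r e : eqv e (ESeq e (ETest BOne))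
| eqv_S2 e f g : eqv (ESeq (ESeq e f) g) (ESeq e (ESeq f g))
| eqv_S3 e : eqv (ESeq (ETest BZero) e) (ETest BZero)
| eqv_S4 e f g r s : eqv (ESeq (EChoice e r s f) g) (EChoice (ESeq e g) r s (ESeq f g))
| eqv_S5 e f g b : eqv (ESeq (EIf e b f) g) (EIf (ESeq e g) b (ESeq f g))
| eqv_S6 v e : eqv (ESeq (ERet v) e) (ERet v)
| eqv_S7 b c : eqv (ESeq (ETest b) (ETest c)) (ETest (BAnd b c))
| eqv_L1 e b : eqv (ELoop e b) (EIf (ESeq e (ELoop e b)) b (ETest BOne))
| eqv_C1 : eqv (odot 1) (ETest BOne)
| eqv_C2 e : eqv (ESeq (odot 0) e) (odot 0)
| eqv_W1 e r s : eqv (EChoice e r s e) (ESeq (odot (r + s)) e)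
| eqv_W2 e f r s : eqv (EChoice e r s f) (EChoice f s r e)
| eqv_W3 e f g r s t u :
    eqv (EChoice e r s (EChoice f t u g)) (EChoice (EChoice e r (s * t) f) 1 (s * u) g)
| eqv_W4 e f r s u : eqv (EChoice e (r * u) s f) (EChoice (ESeq (odot u) e) r s f)
| eqv_L2 e f g b c r s :
    eqv e (EIf (EChoice f r s (ETest BOne)) c g) ->
    eqv (ESeq (ETest c) (ELoop e b))
        (ESeq (ETest c) (EIf (ESeq (odot (star s * r)) (ESeq f (ELoop e b))) b (ETest BOne)))
| eqv_F1 e f g b :
    eqv g (EIf (ESeq e g) b f) -> (forall a, Efun e a = 0) ->
    eqv g (ESeq (ELoop e b) f).

Inductive summand (X : Type) : Type :=
| SExp (f : exp)
| SVar (g : exp) (x : X).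

(* a term: for each atom alpha a weighted sum w_alpha = (+)_{i in I} r_i . t_i,
   given as the finite list of pairs (r_i, t_i) *)
Definition term (X : Type) := atom -> seq (S * summand X).

Definition inst (X : Type) (h : X -> exp) (t : summand X) : exp :=
  match t with SExp f => f | SVar g x => ESeq g (h x) end.

Fixpoint wsumE (l : seq (S * exp)) : exp :=
  match l with
  | [::] => odot 0
  | (r, t) :: l' => EChoice t r 1 (wsumE l')
  end.

Definition gsum (w : atom -> exp) : exp :=
  foldr (fun a acc => EIf (w a) (atom_test a) acc) (ETest BZero) (enum atom).

Definition hsharp (X : Type) (h : X -> exp) (t : term X) : exp :=
  gsum (fun a => wsumE [seq (rt.1, inst h rt.2) | rt <- t a]).

Definition salomaa (X : finType) (tau : X -> term X) : Prop :=
  forall x a r g y, List.In (r, SVar g y) (tau x a) -> forall a', Efun g a' = 0.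

Definition solution_upto (R : exp -> exp -> Prop) (X : finType) (tau : X -> term X)
  (h : X -> exp) : Prop :=
  forall x, R (h x) (hsharp h (tau x)).

Inductive deqv : exp -> exp -> Prop :=
| deqv_base e f : eqv e f -> deqv e f
| deqv_refl e : deqv e e
| deqv_sym e f : deqv e f -> deqv f e
| deqv_trans e f g : deqv e f -> deqv f g -> deqv e g
| deqv_if e e' f f' b : deqv e e' -> deqv f f' -> deqv (EIf e b f) (EIf e' b f')
| deqv_seq e e' f f' : deqv e e' -> deqv f f' -> deqv (ESeq e f) (ESeq e' f')
| deqv_loop e e' b : deqv e e' -> deqv (ELoop e b) (ELoop e' b)
| deqv_choice e e' f f' r s : deqv e e' -> deqv f f' ->
    deqv (EChoice e r s f) (EChoice e' r s f')
| deqv_UA (X : finType) (tau : X -> term X) (f g : X -> exp) :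
    salomaa tau ->
    (forall x, deqv (f x) (hsharp f (tau x))) ->
    (forall x, deqv (g x) (hsharp g (tau x))) ->
    forall x, deqv (f x) (g x).

End WGKAT.

Arguments Acc {Act Out X}. Arguments Rej {Act Out X}.
Arguments Ret {Act Out X}. Arguments Tr {Act Out X}.

From Pilot Require Import Defs.
From HB Require Import structures.
From mathcomp Require Import all_boot all_order all_algebra.
From mathcomp Require Import boolp classical_sets functions cardinality fsbigop zify.
From Stdlib Require Import Setoid Morphisms.
Set Implicit Arguments. Unset Strict Implicit. Unset Printing Implicit Defensive.
Import GRing.Theory.
Local Open Scope ring_scope.

(* A bisimulation R between e and f, restricted to the finitely many pairs of
   derivatives reachable from (e, f), yields a Salomaa system with one unknown per pair:
   for each atom α, the equation of a pair is the weighted sum of its α-transitions in R.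
   Both projections of R solve this system up to ≡: by the fundamental theorem
   α;g ≡ α;(⊕ ∂(g)_α), and since a weighted sum is determined up to ≡ by its weight
   function, each side of an equation depends only on transition weights, which the
   projections preserve.  (UA) then identifies the two projections, in particular e and f.  Positivity
   of S keeps the system finite: a transition of R with nonzero weight projects to a
   derivative transition with nonzero weight, hence to a reachable derivative. *)

Section WGKAT.
Variables (T : finType) (Act Out : Type) (S : pzSemiRingType) (star : S -> S).
Local Notation exp := (exp T Act Out S).
Local Notation bexp := (bexp T).
Local Notation atom := (atom T).
Local Notation tst b := (ETest Act Out S b).
Local Notation E1 := (tst (BOne T)).
Local Notation E0 := (tst (BZero T)).
Local Notation at_ a := (tst (atom_test a)).
Local Notation act p := (@EAct T Act Out S p).
Local Notation ret v := (@ERet T Act Out S v).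
Local Notation odot := (odot T Act Out).
Local Notation O0 := (odot 0).
Local Notation eqvS := (@eqv T Act Out S star).
Local Notation "e ≈ f" := (eqvS e f) (at level 70).
Local Notation "e ;; f" := (ESeq e f) (at level 45, right associativity).
Local Notation "e ⊕[ r , s ] f" := (EChoice e r s f) (at level 50).

#[local] Instance eqv_Equivalence : Equivalence eqvS.
Proof. by split; [exact: eqv_refl | exact: eqv_sym | exact: eqv_trans]. Qed.
#[local] Instance EIf_Proper : Proper (eqvS ==> eq ==> eqvS ==> eqvS) (@EIf T Act Out S).
Proof. by move=> ? ? ? ? ? -> ? ? ?; apply: eqv_if. Qed.
#[local] Instance ESeq_Proper : Proper (eqvS ==> eqvS ==> eqvS) (@ESeq T Act Out S).
Proof. by move=> ? ? ? ? ? ?; apply: eqv_seq. Qed.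
#[local] Instance EChoice_Proper :
  Proper (eqvS ==> eq ==> eq ==> eqvS ==> eqvS) (@EChoice T Act Out S).
Proof. by move=> ? ? ? ? ? -> ? ? -> ? ? ?; apply: eqv_choice. Qed.

#[local] Hint Resolve eqv_refl : core.

(** * Tests and guarded choice *)

Lemma seqA e f g : (e ;; f) ;; g ≈ e ;; (f ;; g).
Proof. exact: eqv_S2. Qed.

Lemma one_seq e : E1 ;; e ≈ e.
Proof. exact: eqv_S1l. Qed.

Lemma seq_one e : e ;; E1 ≈ e.
Proof. by symmetry; apply: eqv_S1r. Qed.

Lemma zero_seq e : E0 ;; e ≈ E0.
Proof. exact: eqv_S3. Qed.

Lemma ret_seq v e : ret v ;; e ≈ ret v.
Proof. exact: eqv_S6. Qed.

Lemma test_seqE (b c : bexp) : tst b ;; tst c ≈ tst (BAnd b c).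
Proof. exact: eqv_S7. Qed.

Lemma if_idem e b : EIf e b e ≈ e.
Proof. exact: eqv_G1. Qed.

Lemma if_guard e f b : EIf e b f ≈ EIf (tst b ;; e) b f.
Proof. exact: eqv_G2. Qed.

Lemma if_swap e f b : EIf e b f ≈ EIf f (BNeg b) e.
Proof. exact: eqv_G3. Qed.

Lemma if_ifA e f g b c : EIf (EIf e b f) c g ≈ EIf e (BAnd b c) (EIf f c g).
Proof. exact: eqv_G4. Qed.

Lemma test_seq_bequiv (b c : bexp) e : bequiv b c -> tst b ;; e ≈ tst c ;; e.
Proof. by move=> bc; apply: eqv_seq => //; apply: eqv_test_ba. Qed.

Lemma test_seq_test (b c : bexp) e : tst b ;; (tst c ;; e) ≈ tst (BAnd b c) ;; e.
Proof. by rewrite -seqA test_seqE. Qed.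

Lemma unsat_test_seq (b : bexp) e : (forall a, ~~ beval a b) -> tst b ;; e ≈ E0.
Proof.
by move=> nb; rewrite (test_seq_bequiv (c := BZero T)) ?zero_seq // => a; rewrite (negbTE (nb a)).
Qed.

Lemma if_unsat e f (b : bexp) : (forall a, ~~ beval a b) -> EIf e b f ≈ f.
Proof.
move=> nb; rewrite if_guard unsat_test_seq //.
by rewrite -{2}(if_idem f b) [EIf f b f]if_guard unsat_test_seq.
Qed.

Lemma if_congr_then e e' f (b : bexp) : tst b ;; e ≈ tst b ;; e' -> EIf e b f ≈ EIf e' b f.
Proof. by move=> ee'; rewrite if_guard ee' -if_guard. Qed.

Lemma if_congr_else e f f' (b : bexp) :
  tst (BNeg b) ;; f ≈ tst (BNeg b) ;; f' -> EIf e b f ≈ EIf e b f'.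
Proof. by move=> ff'; rewrite if_swap (if_congr_then _ ff') -if_swap. Qed.

Lemma test_seq_zero (b : bexp) : tst b ;; E0 ≈ E0.
Proof. by rewrite test_seqE; apply: eqv_test_ba => a /=; rewrite andbF. Qed.

Lemma test_seq_if (b : bexp) e : tst b ;; e ≈ EIf e b E0.
Proof.
rewrite -{1}(if_idem (tst b ;; e) b) (if_guard e E0 b); apply: if_congr_else.
by rewrite test_seq_zero test_seq_test unsat_test_seq // => a /=; rewrite andNb.
Qed.

Lemma test_seq_if_then (c b : bexp) x y : (forall a, beval a c -> beval a b) ->
  tst c ;; EIf x b y ≈ tst c ;; x.
Proof.
move=> cb; rewrite !test_seq_if if_ifA (eqv_if_ba _ _ _ (c := c)); last first.
  by move=> a /=; case E: (beval a c); rewrite ?andbF // (cb _ E).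
apply: if_congr_else; rewrite test_seq_zero test_seq_if if_ifA if_unsat ?if_idem // => a /=.
by rewrite andbN.
Qed.

Lemma test_seq_if_else (c b : bexp) x y : (forall a, beval a c -> ~~ beval a b) ->
  tst c ;; EIf x b y ≈ tst c ;; y.
Proof.
move=> cb; rewrite !test_seq_if if_ifA if_unsat // => a /=.
by case E: (beval a c); rewrite ?andbF // (negbTE (cb _ E)).
Qed.

Lemma test_split (c b : bexp) e f :
  tst (BAnd c b) ;; e ≈ tst (BAnd c b) ;; f ->
  tst (BAnd c (BNeg b)) ;; e ≈ tst (BAnd c (BNeg b)) ;; f ->
  tst c ;; e ≈ tst c ;; f.
Proof.
have andC (d : bexp) g : tst d ;; (tst c ;; g) ≈ tst (BAnd c d) ;; g.
  by rewrite test_seq_test; apply: test_seq_bequiv => a /=; rewrite andbC.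
move=> Hb Hnb; rewrite -(if_idem (tst c ;; e) b) -(if_idem (tst c ;; f) b).
transitivity (EIf (tst c ;; f) b (tst c ;; e)); first by apply: if_congr_then; rewrite !andC.
by apply: if_congr_else; rewrite !andC.
Qed.

Lemma beval_atom_test (b a : atom) : beval b (atom_test a) = (b == a).
Proof.
have -> : forall l, beval b (foldr (fun t acc =>
    BAnd (if a t then BPrim t else BNeg (BPrim t)) acc) (BOne T) l) = all (fun t => b t == a t) l.
  by elim=> //= t l ->; case: (a t) => /=; rewrite ?eqb_id ?eqbF_neg.
apply/idP/eqP => [/allP ba|->]; last by apply/allP => t _.
by apply/ffunP => t; apply/eqP/ba; rewrite mem_enum.
Qed.

Definition atoms_test (l : seq atom) : bexp :=
  foldr (fun a acc => BPlus (atom_test a) acc) (BZero T) l.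

Lemma beval_atoms_test b l : beval b (atoms_test l) = (b \in l).
Proof. by elim: l => //= a l ->; rewrite beval_atom_test in_cons. Qed.

Lemma eqv_atomwise e f : (forall a, at_ a ;; e ≈ at_ a ;; f) -> e ≈ f.
Proof.
move=> ef.
have ef_on l : tst (atoms_test l) ;; e ≈ tst (atoms_test l) ;; f.
  elim: l => [|a l IHl]; first by rewrite !zero_seq.
  apply: (test_split (b := atom_test a)).
    have on_a g : tst (BAnd (atoms_test (a :: l)) (atom_test a)) ;; g ≈ at_ a ;; g.
      by apply: test_seq_bequiv => x /=; case: (beval x (atom_test a)); rewrite ?andbF.
    by rewrite !on_a.
  have off_a g : tst (BAnd (atoms_test (a :: l)) (BNeg (atom_test a))) ;; g
      ≈ tst (BNeg (atom_test a)) ;; (tst (atoms_test l) ;; g).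
    rewrite test_seq_test; apply: test_seq_bequiv => x /=.
    by case: (beval x (atom_test a)); rewrite ?andbF ?andbT.
  by rewrite !off_a IHl.
have all_atoms g : g ≈ tst (atoms_test (enum atom)) ;; g.
  rewrite -{1}(one_seq g); apply: test_seq_bequiv => x.
  by rewrite beval_atoms_test mem_enum.
by rewrite (all_atoms e) (all_atoms f).
Qed.

Lemma atom_seq_gsum (w : atom -> exp) a : at_ a ;; gsum w ≈ at_ a ;; w a.
Proof.
rewrite /gsum; have : a \in enum atom by rewrite mem_enum.
elim: (enum atom) => //= b l IHl; rewrite in_cons.
case: (eqVneq a b) => [->|ne] /= Hin.
  by rewrite test_seq_if_then // => x; rewrite !beval_atom_test.
rewrite test_seq_if_else ?IHl // => x; rewrite !beval_atom_test => /eqP ->; exact: ne.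
Qed.

(** * Weighted sums *)

Lemma choice_idem e r s : e ⊕[r, s] e ≈ odot (r + s) ;; e.
Proof. exact: eqv_W1. Qed.

Lemma choiceC e f r s : e ⊕[r, s] f ≈ f ⊕[s, r] e.
Proof. exact: eqv_W2. Qed.

Lemma choiceA e f g r s t u : e ⊕[r, s] (f ⊕[t, u] g) ≈ (e ⊕[r, s * t] f) ⊕[1, s * u] g.
Proof. exact: eqv_W3. Qed.

Lemma choice_odot e f r s u : e ⊕[r * u, s] f ≈ (odot u ;; e) ⊕[r, s] f.
Proof. exact: eqv_W4. Qed.

Lemma choice_nest e f g r s t u :
  e ⊕[r, s] (f ⊕[t, u] g) ≈ e ⊕[r, 1] (f ⊕[s * t, s * u] g).
Proof. exact: eqv_D2. Qed.

Lemma test_seq_choice (b : bexp) e f r s :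
  tst b ;; (e ⊕[r, s] f) ≈ tst b ;; ((tst b ;; e) ⊕[r, s] (tst b ;; f)).
Proof. exact: eqv_D3. Qed.

Lemma choice_seq e f g r s : (e ⊕[r, s] f) ;; g ≈ (e ;; g) ⊕[r, s] (f ;; g).
Proof. exact: eqv_S4. Qed.

Lemma odot0_seq e : O0 ;; e ≈ O0.
Proof. exact: eqv_C2. Qed.

Lemma choiceA1 e f g r s : e ⊕[r, 1] (f ⊕[s, 1] g) ≈ (e ⊕[r, s] f) ⊕[1, 1] g.
Proof. by rewrite choiceA !mul1r. Qed.

Lemma choice_odot1 e f s u : e ⊕[u, s] f ≈ (odot u ;; e) ⊕[1, s] f.
Proof. by rewrite -choice_odot mul1r. Qed.

Lemma choice_1_0_odot0 e f : e ⊕[1, 0] f ≈ O0 ⊕[1, 1] e.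
Proof. by rewrite choiceC choice_odot1 odot0_seq. Qed.

Lemma choice_1_0 e f : e ⊕[1, 0] f ≈ e.
Proof.
rewrite choice_1_0_odot0 -(choice_1_0_odot0 e E0).
rewrite -[X in _ ≈ X]one_seq -(eqv_C1 T Act Out star) /odot choice_seq.
by rewrite one_seq zero_seq.
Qed.

Lemma odot0_choice e : O0 ⊕[1, 1] e ≈ e.
Proof. by rewrite -(choice_1_0_odot0 e E0) choice_1_0. Qed.

Lemma choice_0_1 e f : e ⊕[0, 1] f ≈ f.
Proof. by rewrite choice_odot1 odot0_seq odot0_choice. Qed.

Lemma wcons_swap e f r s g : e ⊕[r, 1] (f ⊕[s, 1] g) ≈ f ⊕[s, 1] (e ⊕[r, 1] g).
Proof. by rewrite choiceA1 (choiceA1 f) (choiceC e f). Qed.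

Lemma wcons_merge e r s g : e ⊕[r, 1] (e ⊕[s, 1] g) ≈ e ⊕[r + s, 1] g.
Proof. by rewrite choiceA1 choice_idem -choice_odot1. Qed.

Lemma choice_wcons f r s e t g : f ⊕[r, s] (e ⊕[t, 1] g) ≈ e ⊕[s * t, 1] (f ⊕[r, s] g).
Proof.
rewrite choice_nest choiceA !mul1r mulr1 (choiceC f e).
by symmetry; rewrite choiceA !mul1r.
Qed.

Lemma choice_odot0 f r s : f ⊕[r, s] O0 ≈ f ⊕[r, 1] O0.
Proof. by rewrite /odot choice_nest !mulr0. Qed.

Fixpoint wsum_onto (l : seq (S * exp)) (g : exp) : exp :=
  if l is (r, e) :: l' then e ⊕[r, 1] wsum_onto l' g else g.

Lemma wsum_onto_odot0 l : wsum_onto l O0 = wsumE l.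
Proof. by elim: l => // [[r e] l] /= ->. Qed.

Lemma wsum_onto_cat l1 l2 g : wsum_onto (l1 ++ l2) g = wsum_onto l1 (wsum_onto l2 g).
Proof. by elim: l1 => // [[r e] l] /= ->. Qed.

Lemma wsum_onto_congr l g g' : g ≈ g' -> wsum_onto l g ≈ wsum_onto l g'.
Proof. by elim: l => // [[r e] l] /= IHl gg'; rewrite IHl. Qed.

Definition wscale (X : Type) (r : S) (l : seq (S * X)) : seq (S * X) :=
  [seq (r * p.1, p.2) | p <- l].

Lemma wscale1 (X : Type) (l : seq (S * X)) : wscale 1 l = l.
Proof. by elim: l => // [[r x] l] /= ->; rewrite mul1r. Qed.

Lemma choice_wsum_onto f r s l g :
  f ⊕[r, s] wsum_onto l g ≈ wsum_onto (wscale s l) (f ⊕[r, s] g).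
Proof. by elim: l => // [[t e] l] /= IHl; rewrite choice_wcons IHl. Qed.

Lemma wsum_choice r s l1 l2 :
  wsumE l1 ⊕[r, s] wsumE l2 ≈ wsumE (wscale r l1 ++ wscale s l2).
Proof.
have scale_odot0 s' l : wsumE l ⊕[s', 1] O0 ≈ wsumE (wscale s' l).
  rewrite choiceC -wsum_onto_odot0 choice_wsum_onto -wsum_onto_odot0.
  by apply: wsum_onto_congr; rewrite choice_odot0 odot0_choice.
rewrite choiceC -(wsum_onto_odot0 l1) choice_wsum_onto -(wsum_onto_odot0 (_ ++ _)).
rewrite wsum_onto_cat wsum_onto_odot0.
by apply: wsum_onto_congr; rewrite choice_odot0 scale_odot0.
Qed.

Lemma wsum1 e : wsumE [:: (1, e)] ≈ e.
Proof. by rewrite /= choiceC odot0_choice. Qed.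

Definition wmap (X Y : Type) (h : X -> Y) (l : seq (S * X)) : seq (S * Y) :=
  [seq (p.1, h p.2) | p <- l].

Lemma wsum_seq l g : wsumE l ;; g ≈ wsumE (wmap (fun e => e ;; g) l).
Proof. by elim: l => [|[r e] l IHl] /=; rewrite ?odot0_seq // choice_seq IHl. Qed.

Lemma wsum_congr (X : Type) (l : seq (S * X)) (h h' : X -> exp) :
  (forall p, List.In p l -> h p.2 ≈ h' p.2) ->
  wsumE (wmap h l) ≈ wsumE (wmap h' l).
Proof.
elim: l => // [[r x] l] IHl hh' /=; apply: eqv_choice; first by apply: (hh' (r, x)); left.
by apply: IHl => p pl; apply: hh'; right.
Qed.

Lemma test_seq_wsum_congr (b : bexp) (X : Type) (l : seq (S * X)) (h h' : X -> exp) :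
  (forall p, List.In p l -> tst b ;; h p.2 ≈ tst b ;; h' p.2) ->
  tst b ;; wsumE (wmap h l) ≈ tst b ;; wsumE (wmap h' l).
Proof.
elim: l => // [[r x] l] IHl hh' /=.
rewrite test_seq_choice [X in _ ≈ X]test_seq_choice; apply: eqv_seq => //.
apply: eqv_choice; first by apply: (hh' (r, x)); left.
by apply: IHl => p pl; apply: hh'; right.
Qed.

Lemma wsum_flatten (X : Type) (l : seq (S * X)) (M : X -> seq (S * exp)) :
  wsumE (wmap (fun x => wsumE (M x)) l) ≈ wsumE (flatten [seq wscale p.1 (M p.2) | p <- l]).
Proof. by elim: l => // [[r x] l] /= IHl; rewrite IHl wsum_choice wscale1. Qed.

Definition weight (X : Type) (l : seq (S * X)) (x : X) : S :=
  \sum_(p <- l) (if `[< p.2 = x >] then p.1 else 0).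

Lemma weight_nil (X : Type) (x : X) : weight [::] x = 0.
Proof. by rewrite /weight big_nil. Qed.

Lemma weight_cons (X : Type) r (y : X) l x :
  weight ((r, y) :: l) x = (if `[< y = x >] then r else 0) + weight l x.
Proof. by rewrite /weight big_cons. Qed.

Definition wremove (X : Type) (x : X) (l : seq (S * X)) := [seq p <- l | ~~ `[< p.2 = x >]].

Lemma weight_wremove (X : Type) (x : X) l y :
  weight (wremove x l) y = if `[< y = x >] then 0 else weight l y.
Proof.
elim: l => [|[r z] l IHl] /=; first by rewrite weight_nil; case: ifP.
case: (asboolP (z = x)) => [zx|zx] /=.
  rewrite IHl weight_cons; case: (asboolP (y = x)) => // yx.
  by rewrite asboolF ?add0r // => zy; apply: yx; rewrite -zy.
rewrite !weight_cons IHl; case: (asboolP (y = x)) => // yx.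
by rewrite asboolF ?add0r // => zy; apply: zx; rewrite zy.
Qed.

Lemma wsum_extract x l : wsumE l ≈ x ⊕[weight l x, 1] wsumE (wremove x l).
Proof.
elim: l => [|[r e] l IHl] /=; first by rewrite weight_nil choice_0_1.
rewrite weight_cons; case: (pselect (e = x)) => [ex|ex].
  by subst x; rewrite asboolT //= IHl wcons_merge.
by rewrite asboolF //= add0r IHl wcons_swap.
Qed.

Lemma wsum_eqv_weight l1 l2 : weight l1 =1 weight l2 -> wsumE l1 ≈ wsumE l2.
Proof.
(* Pull the same summand out of both sides; the remainders have equal weights and are shorter. *)
have [n] := ubnP (size l1 + size l2); elim: n l1 l2 => // n IHn l1 l2 size_lt w12.
have extract x : (size (wremove x l1) + size (wremove x l2) < n)%N -> wsumE l1 ≈ wsumE l2.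
  move=> size_lt'; rewrite (wsum_extract x l1) (wsum_extract x l2) w12.
  by apply: eqv_choice => //; apply: IHn => // y; rewrite !weight_wremove w12.
have size_rm (x : exp) (l : seq (S * exp)) : (size (wremove x l) <= size l)%N.
  by rewrite size_filter count_size.
move: size_lt w12 extract.
case: l1 => [|[r e] l1]; case: l2 => [|[r' e'] l2] //= size_lt _ extract.
- by apply: (extract e'); rewrite /= asboolT //=; have := size_rm e' l2; lia.
- by apply: (extract e); rewrite /= asboolT //=; have := size_rm e l1; lia.
- apply: (extract e); rewrite /= asboolT //=.
  by have := size_rm e l1; have := size_rm e ((r', e') :: l2); rewrite /=; lia.
Qed.

Lemma weight_cat (X : Type) (l1 l2 : seq (S * X)) x :
  weight (l1 ++ l2) x = weight l1 x + weight l2 x.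
Proof. by rewrite /weight big_cat. Qed.

Lemma weight_wscale (X : Type) r (l : seq (S * X)) x : weight (wscale r l) x = r * weight l x.
Proof.
rewrite /weight big_map big_distrr /=; apply: eq_bigr => p _.
by case: ifP; rewrite ?mulr0.
Qed.

Lemma weight_flatten (X Y : Type) (l : seq (S * X)) (M : X -> seq (S * Y)) y :
  weight (flatten [seq wscale p.1 (M p.2) | p <- l]) y = \sum_(p <- l) p.1 * weight (M p.2) y.
Proof.
elim: l => [|p l IHl] /=; first by rewrite weight_nil big_nil.
by rewrite weight_cat IHl big_cons weight_wscale.
Qed.

Lemma weight1 (X : Type) (x : X) : weight [:: (1, x)] =1 @dirac S X x.
Proof.
move=> y; rewrite weight_cons weight_nil addr0 /dirac.
by congr (if _ then _ else _); apply: asbool_equiv_eq; split=> ->.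
Qed.

Lemma weight_wmap (X Y : Type) (h : X -> Y) l y :
  weight (wmap h l) y = \sum_(p <- l) (if `[< h p.2 = y >] then p.1 else 0).
Proof. by rewrite /weight big_map. Qed.

Lemma weight_wmap_inj (X Y : Type) (h : X -> Y) l x :
  injective h -> weight (wmap h l) (h x) = weight l x.
Proof.
move=> h_inj; rewrite weight_wmap; apply: eq_bigr => p _.
by congr (if _ then _ else _); apply: asbool_equiv_eq; split=> [/h_inj|->].
Qed.

Lemma weight_wmap_out (X Y : Type) (h : X -> Y) l y :
  (forall x, h x <> y) -> weight (wmap h l) y = 0.
Proof. by move=> hy; rewrite weight_wmap big1 // => p _; rewrite asboolF. Qed.

Lemma eq_weight_wmap (X Y : Type) (h : X -> Y) l1 l2 : injective h ->
  weight l1 =1 weight l2 -> weight (wmap h l1) =1 weight (wmap h l2).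
Proof.
move=> h_inj w12 y; have [[x <-]|hy] := pselect (exists x, h x = y).
  by rewrite !weight_wmap_inj.
by rewrite !weight_wmap_out // => x hx; apply: hy; exists x.
Qed.

Lemma odot_seq_wsum r l : odot r ;; wsumE l ≈ wsumE (wscale r l).
Proof.
rewrite /odot choice_seq one_seq zero_seq -[X in _ ⊕[_, _] X](wsum1 E0) wsum_choice.
apply: wsum_eqv_weight => y; rewrite weight_cat /= weight_cons weight_nil mul0r.
by case: ifP; rewrite !addr0.
Qed.

Lemma weight_notin (X : Type) (l : seq (S * X)) (x : {classic X}) :
  x \notin [seq (p.2 : {classic X}) | p <- l] -> weight l x = 0.
Proof.
elim: l => [|[q y] l IHl] /=; first by rewrite weight_nil.
rewrite in_cons negb_or => /andP[/eqP xy xl]; rewrite weight_cons IHl // addr0 asboolF //.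
by move=> yx; apply: xy; rewrite yx.
Qed.

Lemma big_weight (X : Type) (r : seq {classic X}) (l : seq (S * X)) (F : X -> S) :
  uniq r -> (forall p, List.In p l -> (p.2 : {classic X}) \in r) ->
  \sum_(x <- r) weight l x * F x = \sum_(p <- l) p.1 * F p.2.
Proof.
move=> r_uniq; elim: l => [|[q y] l IHl] l_r.
  by rewrite big_nil big1 // => x _; rewrite weight_nil mul0r.
rewrite big_cons -IHl; last by move=> p pl; apply: l_r; right.
under eq_bigr do rewrite weight_cons mulrDl.
rewrite big_split /= (bigD1_seq (y : {classic X})) //=; last by apply: (l_r (q, y)); left.
rewrite asboolT // big1 ?addr0 // => x /eqP xy.
by rewrite asboolF ?mul0r // => yx; apply: xy; rewrite yx.
Qed.

Lemma fsbig_weight (X : Type) (l : seq (S * X)) (F : X -> S) :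
  \sum_(x \in [set: {classic X}]) weight l x * F x = \sum_(p <- l) p.1 * F p.2.
Proof.
set r := undup [seq (p.2 : {classic X}) | p <- l].
rewrite (fsbigE r) ?undup_uniq //; last first.
  by move=> x _; rewrite mem_undup => xl; rewrite weight_notin ?mul0r.
rewrite (eq_bigl xpredT) => [|x]; last by rewrite in_setT.
apply: big_weight; first exact: undup_uniq.
move=> p; rewrite mem_undup; elim: l {r} => //= q l IHl [->|pl]; first exact: mem_head.
by rewrite in_cons IHl ?orbT.
Qed.

Lemma wmap_comp (X Y Z : Type) (g : Y -> Z) (h : X -> Y) l : wmap g (wmap h l) = wmap (g \o h) l.
Proof. by rewrite /wmap -map_comp. Qed.

Lemma wmap_cat (X Y : Type) (h : X -> Y) l1 l2 : wmap h (l1 ++ l2) = wmap h l1 ++ wmap h l2.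
Proof. exact: map_cat. Qed.

Lemma wmap_wscale (X Y : Type) (h : X -> Y) r l : wmap h (wscale r l) = wscale r (wmap h l).
Proof. by rewrite /wmap /wscale -!map_comp. Qed.

Lemma wmap_flatten (X Y Z : Type) (h : Y -> Z) (l : seq (S * X)) (M : X -> seq (S * Y)) :
  wmap h (flatten [seq wscale p.1 (M p.2) | p <- l]) =
  flatten [seq wscale p.1 (wmap h (M p.2)) | p <- l].
Proof. by elim: l => //= p l IHl; rewrite -IHl /wmap map_cat -/(wmap h (M p.2)) -wmap_wscale. Qed.

Lemma wremove_neq (X : Type) (x : X) l p : List.In p (wremove x l) -> p.2 <> x.
Proof.
elim: l => //= q l IHl; case: (asboolP (q.2 = x)) => /= [_|qx]; first exact: IHl.
by case=> [<-|/IHl].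
Qed.

(** * The fundamental theorem *)

Local Notation obsx := (obs Act Out exp).
Local Notation der := (@Defs.deriv T Act Out S star).

Definition obs_exp (o : obsx) : exp :=
  match o with Acc => E1 | Rej => E0 | Ret v => ret v | Tr p e => act p ;; e end.

Lemma obs_exp_inj : injective obs_exp.
Proof. by case=> [||v|p e] [||v'|p' e'] //= => [[->]|[-> ->]]. Qed.

Definition obs_sum (l : seq (S * obsx)) : exp := wsumE (wmap obs_exp l).

Lemma obs_sum_eqv_weight l1 l2 : weight l1 =1 weight l2 -> obs_sum l1 ≈ obs_sum l2.
Proof. by move=> w12; apply/wsum_eqv_weight/eq_weight_wmap => //; exact: obs_exp_inj. Qed.

Definition obs_seq (f : exp) (o : obsx) : obsx :=
  if o is Tr p e then Tr p (e ;; f) else o.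

Lemma obs_seq_inj f : injective (obs_seq f).
Proof. by case=> [||v|p e] [||v'|p' e'] //= [-> ->]. Qed.

Lemma obs_exp_seq o f : o <> Acc -> obs_exp o ;; f ≈ obs_exp (obs_seq f o).
Proof. by case: o => [||v|p e] //= _; rewrite ?zero_seq ?ret_seq ?seqA. Qed.

Lemma obs_sum_seq l f : (forall p, List.In p l -> p.2 <> Acc) ->
  obs_sum l ;; f ≈ obs_sum (wmap (obs_seq f) l).
Proof.
move=> l_acc; rewrite /obs_sum wsum_seq !wmap_comp.
by apply: wsum_congr => p pl /=; apply/obs_exp_seq/l_acc.
Qed.

Definition cont_list (l : seq (S * obsx)) (f : exp) (o : obsx) : seq (S * obsx) :=
  if o is Acc then l else [:: (1, obs_seq f o)].

Lemma weight_cont_list l f d o : weight l =1 d -> weight (cont_list l f o) =1 cont d f o.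
Proof. by case: o => [||v|p e] //= _ y; rewrite weight1. Qed.

Lemma atom_seq_test a (b : bexp) :
  at_ a ;; tst b ≈ at_ a ;; obs_exp (if ale a b then Acc else Rej).
Proof.
rewrite test_seqE; case: ifP => ab /=; rewrite test_seqE; apply: eqv_test_ba => x /=;
  by rewrite beval_atom_test; case: eqP => //= ->; exact: ab.
Qed.

Definition sums_derivative (l : seq (S * obsx)) (e : exp) (a : atom) : Prop :=
  weight l =1 der e a /\ at_ a ;; e ≈ at_ a ;; obs_sum l.

Lemma sums_derivative1 o e a :
  der e a =1 @dirac S obsx o -> at_ a ;; e ≈ at_ a ;; obs_exp o ->
  sums_derivative [:: (1, o)] e a.
Proof. by move=> de ee; split=> [y|]; rewrite ?weight1 ?de // /obs_sum wsum1. Qed.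

Lemma sums_derivative_seq l1 l2 e1 e2 a :
  sums_derivative l1 e1 a -> sums_derivative l2 e2 a ->
  sums_derivative (flatten [seq wscale p.1 (cont_list l2 e2 p.2) | p <- l1]) (e1 ;; e2) a.
Proof.
move=> [w1 ee1] [w2 ee2]; split=> [y|].
  rewrite weight_flatten -(fsbig_weight l1 (fun o => weight (cont_list l2 e2 o) y)) /=.
  by apply: eq_fsbigr => o _; rewrite w1 (weight_cont_list _ _ w2).
rewrite -seqA ee1 seqA /obs_sum wsum_seq wmap_comp wmap_flatten.
transitivity (at_ a ;; wsumE (wmap (fun o => obs_sum (cont_list l2 e2 o)) l1)).
  apply: test_seq_wsum_congr => -[r o] _ /=; case: (pselect (o = Acc)) => [->|o_acc] /=.
    by rewrite one_seq ee2.
  by rewrite obs_exp_seq //; case: o o_acc => //= *; rewrite /obs_sum wsum1.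
by apply: eqv_seq => //; apply: (wsum_flatten _ (fun o => wmap obs_exp (cont_list l2 e2 o))).
Qed.

Lemma weight_loop_list l e b a : ale a b -> weight l =1 der e a ->
  weight (wscale (star (weight l Acc)) (wmap (obs_seq (ELoop e b)) (wremove Acc l)))
  =1 der (ELoop e b) a.
Proof.
move=> ab w y; rewrite weight_wscale /= ab w.
have w_rm o : o <> Acc ->
    weight (wmap (obs_seq (ELoop e b)) (wremove Acc l)) (obs_seq (ELoop e b) o) = der e a o.
  by move=> o_acc; rewrite weight_wmap_inj ?weight_wremove ?asboolF ?w //; exact: obs_seq_inj.
case: y => [||v|p g].
- rewrite (weight_wmap_inj _ Acc (@obs_seq_inj (ELoop e b))) weight_wremove asboolT //.
  by rewrite mulr0.
- by rewrite -(w_rm Rej).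
- by rewrite -(w_rm (Ret v)).
have [[e' ->]|not_seq] := pselect (exists e', g = e' ;; ELoop e b).
  by rewrite asboolT // -(w_rm (Tr p e')).
rewrite weight_wmap_out ?mulr0; last by case=> [||v|p' e''] //= [_ ge]; apply: not_seq; exists e''.
case: g not_seq => // e' k not_seq; case: (asboolP (k = ELoop e b)) => // k_loop.
by case: not_seq; exists e'; rewrite k_loop.
Qed.

Lemma sums_derivative_loop l e b a : ale a b -> sums_derivative l e a ->
  sums_derivative (wscale (star (weight l Acc)) (wmap (obs_seq (ELoop e b)) (wremove Acc l)))
    (ELoop e b) a.
Proof.
move=> ab [w ee]; split; first exact: weight_loop_list.
set s := weight l Acc; set l' := wremove Acc l.
(* Isolating the acceptance weight [s] of [e] puts [e] in the shape required by (L2). *)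
have e_unfold : e ≈ EIf (obs_sum l' ⊕[1, s] E1) (atom_test a) e.
  rewrite -{1}(if_idem e (atom_test a)); apply: if_congr_then.
  rewrite ee (obs_sum_eqv_weight (l2 := (s, Acc) :: l')) /=; first by rewrite choiceC.
  move=> y; rewrite weight_cons weight_wremove; case: (asboolP (y = Acc)) => [->|y_acc].
    by rewrite asboolT // addr0.
  by rewrite asboolF ?add0r // => acc_y; apply: y_acc.
rewrite (eqv_L2 b e_unfold) mulr1 test_seq_if_then; last first.
  by move=> x; rewrite beval_atom_test => /eqP ->.
rewrite obs_sum_seq; last exact: wremove_neq.
by rewrite /obs_sum odot_seq_wsum wmap_wscale.
Qed.

Lemma sums_derivative_choice l1 l2 e1 e2 r s a :
  sums_derivative l1 e1 a -> sums_derivative l2 e2 a ->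
  sums_derivative (wscale r l1 ++ wscale s l2) (e1 ⊕[r, s] e2) a.
Proof.
move=> [w1 ee1] [w2 ee2]; split=> [y|]; first by rewrite weight_cat !weight_wscale w1 w2.
by rewrite test_seq_choice ee1 ee2 -test_seq_choice /obs_sum wsum_choice wmap_cat !wmap_wscale.
Qed.

Lemma atom_seq_if a (b : bexp) e f : at_ a ;; EIf e b f ≈ at_ a ;; (if ale a b then e else f).
Proof.
case ab: (ale a b); [apply: test_seq_if_then | apply: test_seq_if_else];
  by move=> x; rewrite beval_atom_test => /eqP ->; rewrite -/(ale a b) ab.
Qed.

Theorem fundamental_theorem e a : exists l, sums_derivative l e a.
Proof.
elim: e => [p|b|e1 [l1 IH1] b e2 [l2 IH2]|e1 [l1 IH1] e2 [l2 IH2]|e1 [l1 IH1] b|v|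
            e1 [l1 IH1] r s e2 [l2 IH2]].
- by exists [:: (1, Tr p E1)]; apply: sums_derivative1; rewrite //= seq_one.
- by exists [:: (1, if ale a b then Acc else Rej)]; apply: sums_derivative1; rewrite ?atom_seq_test.
- by exists (if ale a b then l1 else l2); rewrite /sums_derivative /= atom_seq_if; case: ifP.
- by eexists; apply: sums_derivative_seq IH1 IH2.
- case ab: (ale a b); first by eexists; apply: sums_derivative_loop IH1.
  exists [:: (1, Acc)]; apply: sums_derivative1 => [y|] /=.
    by rewrite ab /dirac; case: asboolP => [->|]; case: y => // /(_ erefl).
  by rewrite (eqv_L1 star) atom_seq_if ab.
- by exists [:: (1, Ret v)]; apply: sums_derivative1.
- by eexists; apply: sums_derivative_choice IH1 IH2.
Qed.

(** * Pushforwards and positivity *)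

Definition obs_map (X Y : Type) (h : X -> Y) (o : obs Act Out X) : obs Act Out Y :=
  match o with Acc => Acc | Rej => Rej | Ret v => Ret v | Tr p x => Tr p (h x) end.

Lemma weight_finite_support (Y X : Type) (F : Y -> S) (h : Y -> X) x : fin_supp F ->
  weight [seq (F o, h o) | o <- finite_support 0 [set: {classic Y}] F] x
  = \sum_(o \in [set o : {classic Y} | h o = x]) F o.
Proof.
move=> F_fin; rewrite /weight big_map fsbig_mkcond.
have F_fin' : finite_set ([set: {classic Y}] `&` F @^-1` [set~ 0]) by rewrite setTI.
rewrite (fsbigE (finite_support 0 [set: {classic Y}] F)) //; last first.
  move=> o _; rewrite in_finite_support // => o_supp; rewrite /patch; case: ifP => // _.
  by have [//|Fo] := pselect (F o = 0); case/negP: o_supp; rewrite in_setE.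
rewrite [RHS](eq_bigl xpredT) => [|o]; last by rewrite in_setT.
by apply: eq_bigr => o _; rewrite /patch; congr (if _ then _ else _).
Qed.

Lemma homomorphism_pushforward (X Y : Type) (beta : wautomaton T Act Out S X)
    (gamma : wautomaton T Act Out S Y) (h : X -> Y) x a y :
  homomorphism beta gamma h ->
  gamma (h x) a y = \sum_(o \in [set o : {classic (obs Act Out X)} | obs_map h o = y]) beta x a o.
Proof.
move=> /(_ x a) [hAcc hRej hRet hTr].
have single o0 : (forall o, obs_map h o = obs_map h o0 <-> o = o0) ->
    \sum_(o \in [set o : {classic (obs Act Out X)} | obs_map h o = obs_map h o0]) beta x a o
    = beta x a o0.
  move=> o0_only; rewrite (_ : [set o | _]%classic = [set o0]%classic) ?fsbig_set1 //.
  by apply/seteqP; split=> o /o0_only.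
case: y => [||v|p y].
- by rewrite hAcc (single Acc) // => -[].
- by rewrite hRej (single Rej) // => -[].
- by rewrite hRet (single (Ret v)) // => -[] //= w; split=> -[->].
rewrite hTr /mass; congr (\sum_(_ \in _) _); apply/seteqP; split=> o /=.
  by case=> x' [-> <-].
by case: o => //= q x' [-> <-]; exists x'.
Qed.

Section Positivity.
Hypothesis S_positive : forall x y : S, x + y = 0 -> x = 0 /\ y = 0.

Lemma positive_big_eq0 (Y : eqType) (l : seq Y) (F : Y -> S) y :
  \sum_(z <- l) F z = 0 -> y \in l -> F y = 0.
Proof.
elim: l => // z l IHl; rewrite big_cons => /S_positive[Fz Fl]; rewrite in_cons.
by case/orP => [/eqP ->|]; last exact: IHl.
Qed.

Lemma positive_fsbig_eq0 (Y : Type) (F : Y -> S) (A : set Y) y :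
  fin_supp F -> \sum_(z \in (A : set {classic Y})) F z = 0 -> A y -> F y = 0.
Proof.
move=> F_fin sum0 Ay; have [//|Fy] := pselect (F y = 0).
have A_fin : finite_set ((A : set {classic Y}) `&` F @^-1` [set~ 0]).
  by apply: sub_finite_set F_fin => z [].
have : (y : {classic Y}) \in finite_support 0 (A : set {classic Y}) F.
  by rewrite in_finite_support // in_setE.
exact: positive_big_eq0 sum0.
Qed.

Lemma homomorphism_Tr_neq0 (X Y : Type) (beta : wautomaton T Act Out S X)
    (gamma : wautomaton T Act Out S Y) (h : X -> Y) x a p x' :
  is_wautomaton beta -> homomorphism beta gamma h ->
  beta x a (Tr p x') <> 0 -> gamma (h x) a (Tr p (h x')) <> 0.
Proof.
move=> beta_fin /(_ x a) [_ _ _ hTr] beta_neq0; rewrite hTr => sum0; apply: beta_neq0.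
by apply: positive_fsbig_eq0 sum0 _; [exact: beta_fin | exists x'].
Qed.

End Positivity.

(** * Reachable derivatives *)

Lemma dirac_neq0 (Y : Type) (y z : Y) : @dirac S Y y z <> 0 -> z = y.
Proof. by rewrite /dirac; case: asboolP. Qed.

Lemma deriv_seq_Tr_neq0 e1 e2 a p y : der (e1 ;; e2) a (Tr p y) <> 0 ->
  der e2 a (Tr p y) <> 0 \/ exists2 e', y = e' ;; e2 & der e1 a (Tr p e') <> 0.
Proof.
have [d2_eq0|] := pselect (der e2 a (Tr p y) = 0); last by left.
move=> d_neq0; right; apply: contra_notP d_neq0 => no_step /=.
apply: fsbig1 => -[||v|q e'] _ /=; first by rewrite d2_eq0 mulr0.
- by rewrite /dirac asboolF ?mulr0.
- by rewrite /dirac asboolF ?mulr0.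
rewrite /dirac; case: asboolP => [[<- ye']|_]; last by rewrite mulr0.
have [d1_eq0|d1_neq0] := pselect (der e1 a (Tr p e') = 0); first by rewrite d1_eq0 mul0r.
by case: no_step; exists e'.
Qed.

Lemma deriv_loop_Tr_neq0 e b a p y : der (ELoop e b) a (Tr p y) <> 0 ->
  exists2 e', y = e' ;; ELoop e b & der e a (Tr p e') <> 0.
Proof.
rewrite /=; case: ifP => // _; case: y => // e' k; case: asboolP => [->|_ //] d_neq0.
by exists e' => // d1_eq0; apply: d_neq0; rewrite d1_eq0 mulr0.
Qed.

Lemma deriv_choice_neq0 e1 r s e2 a o : der (e1 ⊕[r, s] e2) a o <> 0 ->
  der e1 a o <> 0 \/ der e2 a o <> 0.
Proof.
move=> /= d_neq0; have [d1_eq0|] := pselect (der e1 a o = 0); last by left.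
by right=> d2_eq0; apply: d_neq0; rewrite d1_eq0 d2_eq0 !mulr0 addr0.
Qed.

Local Notation cexp := {classic exp}.

Fixpoint derivatives (e : exp) : seq cexp :=
  match e with
  | EAct p => [:: act p; E1]
  | ETest b => [:: tst b]
  | ERet v => [:: ret v]
  | EIf e1 b e2 => EIf e1 b e2 :: derivatives e1 ++ derivatives e2
  | EChoice e1 r s e2 => e1 ⊕[r, s] e2 :: derivatives e1 ++ derivatives e2
  | ESeq e1 e2 => [seq (x ;; e2 : cexp) | x : cexp <- derivatives e1] ++ derivatives e2
  | ELoop e1 b => ELoop e1 b :: [seq (x ;; ELoop e1 b : cexp) | x : cexp <- derivatives e1]
  end.

Lemma derivatives_self e : (e : cexp) \in derivatives e.
Proof.
elim: e => [p|b|e1 _ b e2 _|e1 IH1 e2 _|e1 _ b|v|e1 _ r s e2 _] /=; rewrite ?mem_head //.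
by rewrite mem_cat (map_f (fun x : cexp => (x ;; e2 : cexp))).
Qed.

Lemma derivatives_closed e x a p y : (x : cexp) \in derivatives e ->
  der x a (Tr p y) <> 0 -> (y : cexp) \in derivatives e.
Proof.
elim: e x y => [q|b|e1 IH1 b e2 IH2|e1 IH1 e2 IH2|e1 IH1 b|v|e1 IH1 r s e2 IH2] x y /=.
- rewrite !inE => /orP[] /eqP x_eq; subst x; move=> /= d; have := dirac_neq0 d => //.
  by case=> _ ->; rewrite eqxx orbT.
- rewrite inE => /eqP x_eq; subst x; move=> /= d.
  by have := dirac_neq0 d; case: ifP.
- rewrite inE mem_cat => /orP[/eqP->|/orP[x1|x2]] /=.
  + by case: ifP => _ d; rewrite inE mem_cat ?(IH1 _ _ (derivatives_self e1) d)
                                             ?(IH2 _ _ (derivatives_self e2) d) ?orbT.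
  + by move=> d; rewrite inE mem_cat (IH1 _ _ x1 d) orbT.
  + by move=> d; rewrite inE mem_cat (IH2 _ _ x2 d) !orbT.
- rewrite mem_cat => /orP[/mapP[x1 x1_in ->]|x2 d]; last by rewrite mem_cat (IH2 _ _ x2 d) orbT.
  case/deriv_seq_Tr_neq0 => [d|[e' -> d]]; rewrite mem_cat.
    by rewrite (IH2 _ _ (derivatives_self e2) d) orbT.
  by rewrite (map_f (fun x : cexp => (x ;; e2 : cexp))) ?(IH1 _ _ x1_in d).
- have from_loop z : der (ELoop e1 b) a (Tr p z) <> 0 ->
      (z : cexp) \in derivatives (ELoop e1 b).
    case/deriv_loop_Tr_neq0 => e' -> d.
    rewrite /= inE (map_f (fun x : cexp => (x ;; ELoop e1 b : cexp))) ?orbT //.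
    exact: IH1 _ _ (derivatives_self e1) d.
  rewrite inE => /orP[/eqP->|/mapP[x1 x1_in ->]]; first exact: from_loop.
  case/deriv_seq_Tr_neq0 => [|[e' -> d]]; first exact: from_loop.
  by rewrite inE (map_f (fun x : cexp => (x ;; ELoop e1 b : cexp))) ?orbT ?(IH1 _ _ x1_in d).
- by rewrite inE => /eqP x_eq; subst x; move=> /= d; have := dirac_neq0 d.
- rewrite inE mem_cat => /orP[/eqP->|/orP[x1|x2]].
  + by case/deriv_choice_neq0 => d; rewrite inE mem_cat ?(IH1 _ _ (derivatives_self e1) d)
                                                    ?(IH2 _ _ (derivatives_self e2) d) ?orbT.
  + by move=> d; rewrite inE mem_cat (IH1 _ _ x1 d) orbT.
  + by move=> d; rewrite inE mem_cat (IH2 _ _ x2 d) !orbT.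
Qed.

(** * The system of a bisimulation *)

Section AutomatonSystem.
Variables (Z : Type) (rho : wautomaton T Act Out S Z) (X : finType) (toX : Z -> X) (vX : X -> Z).
Local Notation obsz := (obs Act Out Z).

Definition obs_summand (o : obsz) : summand T Act Out S X :=
  match o with
  | Acc => SExp X E1 | Rej => SExp X E0 | Ret v => SExp X (ret v)
  | Tr p z => SVar (act p) (toX z)
  end.

Definition transitions (x : X) a : seq {classic obsz} :=
  finite_support 0 [set: {classic obsz}] (rho (vX x) a).

Definition automaton_system (x : X) : term T Act Out S X := fun a =>
  [seq (rho (vX x) a o, obs_summand o) | o <- transitions x a].

Lemma automaton_system_salomaa : salomaa automaton_system.
Proof. by move=> x a r g y /List.in_map_iff [o [o_eq _]] a'; case: o o_eq => //= p z [_ <- _]. Qed.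

Hypothesis rho_fin : is_wautomaton rho.
Hypothesis toX_closed : forall x a p z, rho (vX x) a (Tr p z) <> 0 -> vX (toX z) = z.

Lemma homomorphism_solution (pr : Z -> exp) : homomorphism rho der pr ->
  solution_upto eqvS automaton_system (fun x => pr (vX x)).
Proof.
move=> pr_hom x; apply: eqv_atomwise => a; rewrite /hsharp atom_seq_gsum.
have [l [w ee]] := fundamental_theorem (pr (vX x)) a; rewrite ee; apply: eqv_seq => //.
have -> : [seq (rt.1, inst (fun x => pr (vX x)) rt.2) | rt <- automaton_system x a]
    = wmap obs_exp [seq (rho (vX x) a o, obs_map pr o) | o <- transitions x a].
  rewrite /wmap -!map_comp; apply/(@eq_in_map {classic obsz}) => -[||v|p z] //= z_supp.
  rewrite (toX_closed (x := x) (a := a) (p := p)) //.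
  move: z_supp; rewrite in_finite_support; first by case/set_mem.
  by rewrite setTI; exact: rho_fin.
apply: obs_sum_eqv_weight => y; rewrite w weight_finite_support //.
exact: homomorphism_pushforward.
Qed.

End AutomatonSystem.

Section ReachablePairs.
Variables (R : exp -> exp -> Prop) (e f : exp).
Local Notation Z := {xy : exp * exp | R xy.1 xy.2}.

Definition related_pair (xy : cexp * cexp) : option {classic Z} :=
  if pselect (R xy.1 xy.2) is left xyR then Some (exist _ xy xyR) else None.

Definition reachable_pairs : seq {classic Z} :=
  pmap related_pair [seq (x, y) | x <- derivatives e, y <- derivatives f].

Lemma mem_reachable_pairs (z : Z) :
  ((z : {classic Z}) \in reachable_pairs)
  = ((sval z).1 \in derivatives e) && ((sval z).2 \in derivatives f).
Proof.
rewrite mem_pmap; case: z => -[x y] xyR /=; apply/mapP/andP => [[[x' y'] xy_in]|[xe yf]].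
  rewrite /related_pair; case: pselect => //= xyR' [-> ->].
  by case/allpairsP: xy_in => -[x'' y''] /= [x''e y''f [-> ->]]; split.
exists (x, y); first by apply/allpairsP; exists (x, y).
rewrite /related_pair; case: pselect => //= xyR'.
by rewrite (Prop_irrelevance xyR' xyR).
Qed.

Hypothesis S_positive : forall x y : S, x + y = 0 -> x = 0 /\ y = 0.
Variable rho : wautomaton T Act Out S Z.
Hypotheses (rho_fin : is_wautomaton rho)
  (rho_hom1 : homomorphism rho der (fun z => (sval z).1))
  (rho_hom2 : homomorphism rho der (fun z => (sval z).2)).

Lemma reachable_pairs_closed (z z' : Z) a p : rho z a (Tr p z') <> 0 ->
  (z : {classic Z}) \in reachable_pairs -> (z' : {classic Z}) \in reachable_pairs.
Proof.
rewrite !mem_reachable_pairs => rho_neq0 /andP[z1 z2]; apply/andP; split.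
  exact: derivatives_closed z1 (homomorphism_Tr_neq0 S_positive rho_fin rho_hom1 rho_neq0).
exact: derivatives_closed z2 (homomorphism_Tr_neq0 S_positive rho_fin rho_hom2 rho_neq0).
Qed.

End ReachablePairs.

Theorem bisimilar_deqv (S_positive : forall x y : S, x + y = 0 -> x = 0 /\ y = 0) (e f : exp) :
  bisimilar star e f -> deqv star e f.
Proof.
case=> R [[rho [rho_fin rho_hom1 rho_hom2]] ef].
pose Z := {xy : exp * exp | R xy.1 xy.2}.
pose X : finType := seq_sub (reachable_pairs R e f).
pose vX (x : X) : Z := ssval x.
have ef_reachable : (exist _ (e, f) ef : {classic Z}) \in reachable_pairs R e f.
  by rewrite mem_reachable_pairs !derivatives_self.
pose x0 : X := SeqSub ef_reachable.
pose toX (z : Z) : X := insubd x0 (z : {classic Z}).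
have toX_closed (x : X) a p (z : Z) : rho (vX x) a (Tr p z) <> 0 -> vX (toX z) = z.
  move=> rho_neq0; rewrite /vX val_insubd.
  by rewrite (reachable_pairs_closed S_positive rho_fin rho_hom1 rho_hom2 rho_neq0) ?ssvalP.
have sol1 := homomorphism_solution rho_fin toX_closed rho_hom1.
have sol2 := homomorphism_solution rho_fin toX_closed rho_hom2.
apply: (deqv_UA (f := fun x => (sval (vX x)).1) (g := fun x => (sval (vX x)).2)
  (automaton_system_salomaa (rho := rho) (toX := toX) (vX := vX)) _ _ x0) => x.
- exact: deqv_base (sol1 x).
- exact: deqv_base (sol2 x).
Qed.

End WGKAT.

Theorem mainTheorem11 (T : finType) (Act Out : Type) (S : pzSemiRingType)
  (star : S -> S)
  (positive : forall x y : S, x + y = 0 -> x = 0 /\ y = 0)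
  (refinement : forall x y z w : S, x + y = z + w ->
     exists s t u v : S, [/\ s + t = x, s + u = z, u + v = y & t + v = w])
  (conway_sum : forall a b : S, star (a + b) = star a * star (b * star a))
  (conway_prod : forall a b : S, star (a * b) = 1 + a * star (b * a) * b)
  (e f : exp T Act Out S) :
  bisimilar star e f -> deqv star e f.
Proof. exact: bisimilar_deqv. Qed.
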